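(* Let $\lambda>0$, let $\boldsymbol\alpha^\star$ be the optimal solution of the dual problem $\max_{\boldsymbol\alpha\ge\mathbf0}D_\lambda(\boldsymbol\alpha)$ and $\mathbf m^\star$ the optimal solution of the primal problem $\min_{\mathbf m\ge\mathbf0}P_\lambda(\mathbf m)$. Suppose $\mathbf q\in\mathbb R^{2nK}$ and $r\ge0$ satisfy $\|\boldsymbol\alpha^\star-\mathbf q\|_2^2\le r^2$. Then for every $k\in[p]$, $$\mathbf C_{k,:}\mathbf q+r\|\mathbf C_{k,:}\|_2\le\lambda\ \Longrightarrow\ m_k^\star=0.$$
   Context: Let $n,K,p\ge1$ be integers, $[n]=\{1,\dots,n\}$. For each $i\in[n]$ let $\mathbf x_i\in\mathbb R^p$ have nonnegative entries and let $\mathcal D_i,\mathcal S_i\subseteq[n]$ be sets of size $K$. Put $\mathbf c_{ij}=(\mathbf x_i-\mathbf x_j)\circ(\mathbf x_i-\mathbf x_j)$ (entrywise product). Vectors in $\mathbb R^{2nK}$ are indexed by the pairs $(i,l)$, $l\in\mathcal D_i$ (''different-class pairs'') and $(i,j)$, $j\in\mathcal S_i$ (''same-class pairs''). $\mathbf C\in\mathbb R^{p\times2nK}$ has column $\mathbf c_{il}$ for each different-class pair and $-\mathbf c_{ij}$ for each same-class pair; $\mathbf C_{k,:}$ is its $k$-th row. Fix $L\ge U\ge0$, $\eta>0$; let $\mathbf t\in\mathbb R^{2nK}$ have entry $L$ at different-class pairs and $-U$ at same-class pairs; $\ell_s(x)=([s-x]_+)^2$ with $[z]_+=\max\{z,0\}$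 (entrywise for vectors); $\mathbf1$ is the all-ones vector. For $\lambda>0$ define on $\mathbf m\in\mathbb R^p_{\ge0}$ $$P_\lambda(\mathbf m)=\sum_{i\in[n]}\Big[\sum_{l\in\mathcal D_i}\ell_L(\mathbf m^\top\mathbf c_{il})+\sum_{j\in\mathcal S_i}\ell_{-U}(-\mathbf m^\top\mathbf c_{ij})\Big]+\lambda\Big(\mathbf m^\top\mathbf1+\frac\eta2\|\mathbf m\|_2^2\Big),$$ and on $\boldsymbol\alpha\in\mathbb R^{2nK}_{\ge0}$ $$D_\lambda(\boldsymbol\alpha)=-\frac14\|\boldsymbol\alpha\|_2^2+\mathbf t^\top\boldsymbol\alpha-\frac{\lambda\eta}2\|\mathbf m_\lambda(\boldsymbol\alpha)\|_2^2,\qquad\mathbf m_\lambda(\boldsymbol\alpha)=\frac1{\lambda\eta}[\mathbf C\boldsymbol\alpha-\lambda\mathbf1]_+.$$ *)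

From HB Require Import structures.
From mathcomp Require Import all_boot all_order all_algebra.
From mathcomp Require Import reals.
Set Implicit Arguments. Unset Strict Implicit. Unset Printing Implicit Defensive.
Import Order.TTheory GRing.Theory Num.Theory.
Local Open Scope ring_scope.

Section Defs.
Variables (R : realType) (n p : nat).
Variables (x : 'I_n -> 'I_p -> R) (Dset Sset : 'I_n -> {set 'I_n}).

(* Index set of R^{2nK}: different-class pairs (i,l), l in D_i, and
   same-class pairs (i,j), j in S_i (kept as disjoint summands). *)
Definition pair_idx : finType :=
  ({i : 'I_n & {l : 'I_n | l \in Dset i}} + {i : 'I_n & {j : 'I_n | j \in Sset i}})%type.

Definition cvec (i j : 'I_n) (k : 'I_p) : R := (x i k - x j k) ^+ 2.

Definition Cmat (k : 'I_p) (a : pair_idx) : R :=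
  match a with
  | inl s => cvec (tag s) (sval (tagged s)) k
  | inr s => - cvec (tag s) (sval (tagged s)) k
  end.

Definition tvec (L U : R) (a : pair_idx) : R :=
  match a with inl _ => L | inr _ => - U end.

Definition ell (s z : R) : R := (Num.max (s - z) 0) ^+ 2.

Definition dotc (m : 'I_p -> R) (i j : 'I_n) : R := \sum_k m k * cvec i j k.

Definition Pobj (L U eta lam : R) (m : 'I_p -> R) : R :=
  \sum_(i : 'I_n) (\sum_(l in Dset i) ell L (dotc m i l)
                   + \sum_(j in Sset i) ell (- U) (- dotc m i j))
  + lam * (\sum_k m k + eta / 2 * \sum_k m k ^+ 2).

Definition mlam (eta lam : R) (alpha : pair_idx -> R) (k : 'I_p) : R :=
  Num.max (\sum_a Cmat k a * alpha a - lam) 0 / (lam * eta).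

Definition Dobj (L U eta lam : R) (alpha : pair_idx -> R) : R :=
  - (1 / 4) * \sum_a alpha a ^+ 2 + \sum_a tvec L U a * alpha a
  - lam * eta / 2 * \sum_k mlam eta lam alpha k ^+ 2.

End Defs.

From HB Require Import structures.
From mathcomp Require Import all_boot all_order all_algebra.
From mathcomp Require Import reals.
From mathcomp Require Import ring lra.
Import Order.TTheory GRing.Theory Num.Theory.
Set Implicit Arguments.
Unset Strict Implicit.
Unset Printing Implicit Defensive.
Local Open Scope ring_scope.

(* The duality gap P(m) - D(alpha) splits into per-pair Fenchel-Young gaps of
   the squared hinge, which are nonnegative, and per-feature terms bounded
   below by (lam eta / 2) (m_k - m_lam(alpha)_k)^2 on m >= 0.  At a dual
   optimum alpha_star, the first-order condition in the direction of the
   feasible point 2 [t - C^T m_lam(alpha_star)]_+ shows that the gap vanishes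
   at m_lam(alpha_star).  Hence the primal optimum is m_star = m_lam(alpha_star),
   whose k-th entry is [C_k alpha_star - lam]_+ / (lam eta), and Cauchy-Schwarz
   gives C_k alpha_star <= C_k q + r |C_k| <= lam. *)

Section Ramp.
Variable R : realFieldType.
Implicit Types u v a c g m : R.

Lemma sqr_max0_smooth u v :
  Num.max v 0 ^+ 2 <= Num.max u 0 ^+ 2 + 2 * Num.max u 0 * (v - u) + (v - u) ^+ 2.
Proof.
have [hu|/ltW hu] := leP 0 u; have [hv|/ltW hv] := leP 0 v;
  rewrite ?(max_idPl hu) ?(max_idPl hv) ?(max_idPr hu) ?(max_idPr hv);
  have := sqr_ge0 (v - u); nra.
Qed.

Lemma sqr_max0_fenchel u a : 0 <= a -> 0 <= Num.max u 0 ^+ 2 - a * u + a ^+ 2 / 4.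
Proof.
move=> a0; have := sqr_ge0 (u - a / 2); have := sqr_ge0 a.
have [hu|/ltW hu] := leP 0 u; rewrite ?(max_idPl hu) ?(max_idPr hu); nra.
Qed.

Lemma sqr_max0_fenchel_gap u a : 0 <= a ->
  Num.max u 0 ^+ 2 - a * u + a ^+ 2 / 4 <= (u - a / 2) * (2 * Num.max u 0 - a).
Proof.
move=> a0; have := sqr_ge0 (u - a / 2); have := sqr_ge0 a.
have [hu|/ltW hu] := leP 0 u; rewrite ?(max_idPl hu) ?(max_idPr hu); nra.
Qed.

Lemma max0_quad_eq c g : 0 < c -> c * (Num.max g 0 / c) ^+ 2 = g * (Num.max g 0 / c).
Proof.
move=> c0; have [hg|/ltW hg] := leP 0 g;
  rewrite ?(max_idPl hg) ?(max_idPr hg) ?mul0r ?expr0n ?mulr0 //.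
by field; rewrite gt_eqF.
Qed.

Lemma max0_quad_lb c g m : 0 < c -> 0 <= m ->
  c / 2 * (m - Num.max g 0 / c) ^+ 2 <= c / 2 * m ^+ 2 - g * m + c / 2 * (Num.max g 0 / c) ^+ 2.
Proof.
move=> c0 m0; rewrite -subr_ge0.
have -> : c / 2 * m ^+ 2 - g * m + c / 2 * (Num.max g 0 / c) ^+ 2
            - c / 2 * (m - Num.max g 0 / c) ^+ 2 = (Num.max g 0 - g) * m.
  by field; rewrite gt_eqF.
by apply: mulr_ge0; rewrite // subr_ge0 le_max lexx.
Qed.

Lemma le0_of_quad_bound (S M : R) : 0 <= M ->
  (forall e, 0 < e <= 1 -> e * S <= e ^+ 2 * M) -> S <= 0.
Proof.
move=> M0 bound; rewrite leNgt; apply/negP => S0.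
have SM0 : 0 < S + M by lra.
have e0 : 0 < S / (S + M) by exact: divr_gt0.
have e1 : S / (S + M) <= 1 by rewrite ler_pdivrMr // mul1r; lra.
have := bound _ (introT andP (conj e0 e1)).
rewrite expr2 -mulrA ler_pM2l // mulrAC ler_pdivlMr //.
nra.
Qed.
End Ramp.

Section CauchySchwarz.
Variables (R : rcfType) (I : finType).
Implicit Types c e : I -> R.

Lemma sum_mul_sqr_le c e :
  (\sum_a c a * e a) ^+ 2 <= (\sum_a c a ^+ 2) * (\sum_a e a ^+ 2).
Proof.
set A := \sum_a c a ^+ 2; set B := \sum_a c a * e a; set E := \sum_a e a ^+ 2.
have [E0|E_neq0] := eqVneq E 0.
  suff -> : B = 0 by rewrite E0 expr0n mulr0.
  apply: big1 => a _.
  have /eqP := psumr_eq0P (fun a _ => sqr_ge0 (e a)) E0 (i := a) isT.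
  by rewrite sqrf_eq0 => /eqP ->; rewrite mulr0.
have E_gt0 : 0 < E by rewrite lt_def E_neq0 sumr_ge0 // => a _; exact: sqr_ge0.
have : 0 <= \sum_a (E * c a - B * e a) ^+ 2 by apply: sumr_ge0 => a _; exact: sqr_ge0.
have -> : \sum_a (E * c a - B * e a) ^+ 2 = E * (A * E - B ^+ 2).
  rewrite (eq_bigr (fun a => E ^+ 2 * c a ^+ 2 - 2 * E * B * (c a * e a) + B ^+ 2 * e a ^+ 2));
    last by move=> a _; ring.
  by rewrite big_split /= sumrB -!mulr_sumr -/A -/B -/E; ring.
by rewrite pmulr_rge0 // subr_ge0.
Qed.

Lemma sum_mul_le_sqrt c e r : 0 <= r -> \sum_a e a ^+ 2 <= r ^+ 2 ->
  \sum_a c a * e a <= r * Num.sqrt (\sum_a c a ^+ 2).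
Proof.
move=> r0 le_er.
have A0 : 0 <= \sum_a c a ^+ 2 by apply: sumr_ge0 => a _; exact: sqr_ge0.
apply: le_trans (ler_norm _) _.
rewrite -sqrtr_sqr -[r in r * _](ger0_norm r0) -sqrtr_sqr -sqrtrM ?sqr_ge0 //.
rewrite ler_sqrt ?mulr_ge0 ?sqr_ge0 // mulrC.
exact: le_trans (sum_mul_sqr_le c e) (ler_wpM2l A0 le_er).
Qed.
End CauchySchwarz.

Section Duality.
Variables (R : realType) (n p : nat).
Variables (x : 'I_n -> 'I_p -> R) (Dset Sset : 'I_n -> {set 'I_n}).
Local Notation I := (pair_idx Dset Sset).
Local Notation C := (@Cmat R n p x Dset Sset).

Definition Ctr_mul (m : 'I_p -> R) (a : I) : R := \sum_k C k a * m k.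
Definition C_mul (al : I -> R) (k : 'I_p) : R := \sum_a C k a * al a.

Lemma Ctr_mul_adj (al : I -> R) (m : 'I_p -> R) :
  \sum_a al a * Ctr_mul m a = \sum_k m k * C_mul al k.
Proof.
rewrite /Ctr_mul /C_mul; under eq_bigr do rewrite mulr_sumr.
rewrite exchange_big /=; apply: eq_bigr => k _; rewrite mulr_sumr.
by apply: eq_bigr => a _; ring.
Qed.

Lemma C_mul_lin (al d : I -> R) (e : R) k :
  C_mul (fun a => al a + e * d a) k = C_mul al k + e * C_mul d k.
Proof. by rewrite /C_mul mulr_sumr -big_split; apply: eq_bigr => a _ /=; ring. Qed.

Lemma loss_sum_pairs L U (m : 'I_p -> R) :
  \sum_i (\sum_(l in Dset i) ell L (dotc x m i l) + \sum_(j in Sset i) ell (- U) (- dotc x m i j))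
  = \sum_a ell (tvec L U a) (Ctr_mul m a).
Proof.
have dotcE i j : dotc x m i j = \sum_k cvec x i j k * m k.
  by apply: eq_bigr => k _; rewrite mulrC.
rewrite big_split /= big_sumType /=; congr (_ + _).
- rewrite (eq_bigr (fun s => ell L (dotc x m (tag s) (sval (tagged s))))); last first.
    by move=> s _; rewrite dotcE.
  rewrite -(sig_big_dep xpredT (fun _ => xpredT)
    (fun i (l : {l | l \in Dset i}) => ell L (dotc x m i (val l)))).
  by apply: eq_bigr => i _; rewrite big_sub.
- rewrite (eq_bigr (fun s => ell (- U) (- dotc x m (tag s) (sval (tagged s))))); last first.
    move=> s _; rewrite dotcE -sumrN; congr ell.
    by apply: eq_bigr => k _; rewrite mulNr.
  rewrite -(sig_big_dep xpredT (fun _ => xpredT)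
    (fun i (j : {j | j \in Sset i}) => ell (- U) (- dotc x m i (val j)))).
  by apply: eq_bigr => i _; rewrite big_sub.
Qed.

Variables (L U eta lam : R).
Local Notation t := (@tvec R n Dset Sset L U).
Local Notation P := (Pobj x Dset Sset L U eta lam).
Local Notation D := (@Dobj R n p x Dset Sset L U eta lam).
Local Notation mh := (@mlam R n p x Dset Sset eta lam).

(* Fenchel-Young gap of the squared hinge, whose conjugate is a^2/4 on a >= 0. *)
Definition pair_gap (m : 'I_p -> R) (al : I -> R) (a : I) : R :=
  Num.max (t a - Ctr_mul m a) 0 ^+ 2 - al a * (t a - Ctr_mul m a) + al a ^+ 2 / 4.

Definition coord_gap (m : 'I_p -> R) (al : I -> R) (k : 'I_p) : R :=
  lam * eta / 2 * m k ^+ 2 - (C_mul al k - lam) * m k + lam * eta / 2 * mh al k ^+ 2.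

Lemma Pobj_sub_Dobj m al :
  P m - D al = \sum_a pair_gap m al a + \sum_k coord_gap m al k.
Proof.
rewrite (eq_bigr (fun a => ell (t a) (Ctr_mul m a) - t a * al a + al a * Ctr_mul m a
                            + al a ^+ 2 / 4)); last by move=> a _; rewrite /pair_gap /ell; ring.
rewrite (eq_bigr (fun k => lam * eta / 2 * m k ^+ 2 - m k * C_mul al k + lam * m k
                            + lam * eta / 2 * mh al k ^+ 2)); last by move=> k _; rewrite /coord_gap; ring.
rewrite /Pobj loss_sum_pairs /Dobj !big_split /= !sumrN -!mulr_sumr -!mulr_suml Ctr_mul_adj.
ring.
Qed.

Hypotheses (lam_gt0 : 0 < lam) (eta_gt0 : 0 < eta).
Let leta_gt0 : 0 < lam * eta := mulr_gt0 lam_gt0 eta_gt0.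

Lemma mlam_ge0 al k : 0 <= mh al k.
Proof. by rewrite divr_ge0 ?le_max ?lexx ?orbT // ltW. Qed.

Lemma mlam_eq0 al k : C_mul al k <= lam -> mh al k = 0.
Proof. by rewrite -subr_le0 => /max_idPr; rewrite /mlam -/(C_mul al k) => ->; rewrite mul0r. Qed.

Lemma pair_gap_ge0 m al a : 0 <= al a -> 0 <= pair_gap m al a.
Proof. exact: sqr_max0_fenchel. Qed.

Lemma coord_gap_ge m al k : 0 <= m k ->
  lam * eta / 2 * (m k - mh al k) ^+ 2 <= coord_gap m al k.
Proof. exact: max0_quad_lb. Qed.

Lemma coord_gap_mlam al k : coord_gap (mh al) al k = 0.
Proof.
have := max0_quad_eq (C_mul al k - lam) leta_gt0.
rewrite /coord_gap /mlam -/(C_mul al k) => ?; lra.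
Qed.

Lemma Pobj_sub_Dobj_ge m al : (forall k, 0 <= m k) -> (forall a, 0 <= al a) ->
  \sum_k lam * eta / 2 * (m k - mh al k) ^+ 2 <= P m - D al.
Proof.
move=> m0 al0; rewrite Pobj_sub_Dobj -[leLHS]add0r lerD //.
  by apply: sumr_ge0 => a _; exact: pair_gap_ge0.
by apply: ler_sum => k _; exact: coord_gap_ge.
Qed.

Definition dual_grad (al : I -> R) (a : I) : R := t a - Ctr_mul (mh al) a - al a / 2.

Lemma mlam_sqr_perturb al d e k :
  mh (fun a => al a + e * d a) k ^+ 2 <=
  mh al k ^+ 2 + 2 * e / (lam * eta) * (mh al k * C_mul d k)
  + e ^+ 2 / (lam * eta) ^+ 2 * C_mul d k ^+ 2.
Proof.
rewrite /mlam -/(C_mul _ k) -/(C_mul al k) C_mul_lin.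
set u := C_mul al k - lam; set v := C_mul al k + e * C_mul d k - lam.
have -> : 2 * e / (lam * eta) * (Num.max u 0 / (lam * eta) * C_mul d k) =
          2 * Num.max u 0 * (v - u) / (lam * eta) ^+ 2.
  by rewrite /u /v; field; rewrite !gt_eqF.
have -> : e ^+ 2 / (lam * eta) ^+ 2 * C_mul d k ^+ 2 = (v - u) ^+ 2 / (lam * eta) ^+ 2.
  by rewrite /u /v; field; rewrite !gt_eqF.
rewrite !expr_div_n -!mulrDl ler_pM2r ?invr_gt0 ?exprn_gt0 //.
exact: sqr_max0_smooth.
Qed.

Lemma Dobj_perturb al d e :
  e * (\sum_a dual_grad al a * d a)
  - e ^+ 2 * ((\sum_a d a ^+ 2) / 4 + (\sum_k C_mul d k ^+ 2) / (2 * (lam * eta)))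
  <= D (fun a => al a + e * d a) - D al.
Proof.
have sqr_sum : \sum_a (al a + e * d a) ^+ 2 =
    \sum_a al a ^+ 2 + 2 * e * \sum_a al a * d a + e ^+ 2 * \sum_a d a ^+ 2.
  by rewrite !mulr_sumr -!big_split; apply: eq_bigr => a _ /=; ring.
have lin_sum : \sum_a t a * (al a + e * d a) = \sum_a t a * al a + e * \sum_a t a * d a.
  by rewrite !mulr_sumr -!big_split; apply: eq_bigr => a _ /=; ring.
have grad_sum : \sum_a dual_grad al a * d a =
    \sum_a t a * d a - \sum_k mh al k * C_mul d k - (\sum_a al a * d a) / 2.
  rewrite -Ctr_mul_adj mulr_suml -!sumrB.
  by apply: eq_bigr => a _; rewrite /dual_grad; ring.
have mlam_sum : \sum_k mh (fun a => al a + e * d a) k ^+ 2 <=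
    \sum_k mh al k ^+ 2 + 2 * e / (lam * eta) * \sum_k mh al k * C_mul d k
    + e ^+ 2 / (lam * eta) ^+ 2 * \sum_k C_mul d k ^+ 2.
  by rewrite !mulr_sumr -!big_split; apply: ler_sum => k _; exact: mlam_sqr_perturb.
have := ler_wpM2l (ltW (divr_gt0 leta_gt0 (ltr0n R 2))) mlam_sum.
rewrite /Dobj sqr_sum lin_sum grad_sum.
set X := \sum_k mh al k * C_mul d k; set Y := \sum_k C_mul d k ^+ 2.
set M := \sum_k mh al k ^+ 2; set M' := \sum_k mh _ k ^+ 2.
have -> : lam * eta / 2 * (M + 2 * e / (lam * eta) * X + e ^+ 2 / (lam * eta) ^+ 2 * Y) =
          lam * eta / 2 * M + e * X + e ^+ 2 * (Y / (2 * (lam * eta))).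
  by field; rewrite !gt_eqF.
lra.
Qed.

Lemma dual_opt_grad al : (forall a, 0 <= al a) ->
  (forall beta : I -> R, (forall a, 0 <= beta a) -> D beta <= D al) ->
  \sum_a dual_grad al a * (2 * Num.max (t a - Ctr_mul (mh al) a) 0 - al a) <= 0.
Proof.
move=> al0 al_opt.
(* al + d = 2 [t - C^T m_lam(al)]_+ is feasible, so D cannot increase along d. *)
set d := fun a => 2 * Num.max (t a - Ctr_mul (mh al) a) 0 - al a.
apply: (le0_of_quad_bound (M := (\sum_a d a ^+ 2) / 4
                                 + (\sum_k C_mul d k ^+ 2) / (2 * (lam * eta)))).
  by rewrite addr_ge0 // divr_ge0 ?sumr_ge0 ?mulr_ge0 ?ltW // => *; exact: sqr_ge0.
move=> e /andP[e0 e1].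
have feasible a : 0 <= al a + e * d a.
  have := al0 a; have : 0 <= Num.max (t a - Ctr_mul (mh al) a) 0 by rewrite le_max lexx orbT.
  rewrite /d; nra.
have := al_opt _ feasible; have := Dobj_perturb al d e; lra.
Qed.

Lemma Pobj_mlam_le_Dobj al : (forall a, 0 <= al a) ->
  (forall beta : I -> R, (forall a, 0 <= beta a) -> D beta <= D al) ->
  P (mh al) <= D al.
Proof.
move=> al0 al_opt.
have gap0 : \sum_k coord_gap (mh al) al k = 0 by apply: big1 => k _; exact: coord_gap_mlam.
rewrite -subr_le0 Pobj_sub_Dobj gap0 addr0.
apply: le_trans (dual_opt_grad al0 al_opt); apply: ler_sum => a _.
exact: sqr_max0_fenchel_gap.
Qed.

Lemma primal_opt_eq_mlam al m : (forall a, 0 <= al a) ->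
  (forall beta : I -> R, (forall a, 0 <= beta a) -> D beta <= D al) ->
  (forall k, 0 <= m k) -> (forall m' : 'I_p -> R, (forall k, 0 <= m' k) -> P m <= P m') ->
  forall k, m k = mh al k.
Proof.
move=> al0 al_opt m0 m_opt k.
have term_ge0 k' : 0 <= lam * eta / 2 * (m k' - mh al k') ^+ 2.
  by rewrite mulr_ge0 ?sqr_ge0 // divr_ge0 // ltW.
have sum0 : \sum_k lam * eta / 2 * (m k - mh al k) ^+ 2 = 0.
  apply/eqP; rewrite eq_le (sumr_ge0 _ (fun k' _ => term_ge0 k')) andbT.
  have := Pobj_sub_Dobj_ge m0 al0; have := m_opt _ (mlam_ge0 al).
  have := Pobj_mlam_le_Dobj al0 al_opt; lra.
have /eqP := psumr_eq0P (fun k' _ => term_ge0 k') sum0 (i := k) isT.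
have leta2_neq0 : lam * eta / 2 != 0 by rewrite gt_eqF // divr_gt0.
by rewrite mulf_eq0 (negPf leta2_neq0) sqrf_eq0 subr_eq0 => /eqP.
Qed.
End Duality.

Unset Implicit Arguments.

Theorem theorem4 (R : realType) (n K p : nat)
  (x : 'I_n -> 'I_p -> R) (Dset Sset : 'I_n -> {set 'I_n})
  (L U eta lam : R)
  (alpha_star : pair_idx Dset Sset -> R) (m_star : 'I_p -> R)
  (q : pair_idx Dset Sset -> R) (r : R) :
  (1 <= n)%N -> (1 <= K)%N -> (1 <= p)%N ->
  (forall i k, 0 <= x i k) ->
  (forall i, #|Dset i| = K) -> (forall i, #|Sset i| = K) ->
  0 <= U -> U <= L -> 0 < eta -> 0 < lam ->
  (* alpha_star is an optimal solution of max_{alpha >= 0} D_lam(alpha) *)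
  (forall a, 0 <= alpha_star a) ->
  (forall beta : pair_idx Dset Sset -> R, (forall a, 0 <= beta a) ->
     @Dobj R n p x Dset Sset L U eta lam beta <= @Dobj R n p x Dset Sset L U eta lam alpha_star) ->
  (* m_star is an optimal solution of min_{m >= 0} P_lam(m) *)
  (forall k, 0 <= m_star k) ->
  (forall m : 'I_p -> R, (forall k, 0 <= m k) ->
     Pobj x Dset Sset L U eta lam m_star <= Pobj x Dset Sset L U eta lam m) ->
  0 <= r ->
  \sum_a (alpha_star a - q a) ^+ 2 <= r ^+ 2 ->
  forall k : 'I_p,
    \sum_a @Cmat R n p x Dset Sset k a * q a + r * Num.sqrt (\sum_a @Cmat R n p x Dset Sset k a ^+ 2) <= lam ->
    m_star k = 0.
Proof.
move=> _ _ _ _ _ _ _ _ eta_gt0 lam_gt0 al0 al_opt m0 m_opt r0 dist_q k le_lam.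
rewrite (primal_opt_eq_mlam lam_gt0 eta_gt0 al0 al_opt m0 m_opt) mlam_eq0 //.
have split_q : C_mul x alpha_star k =
    \sum_a Cmat x k a * q a + \sum_a Cmat x k a * (alpha_star a - q a).
  by rewrite -big_split; apply: eq_bigr => a _ /=; ring.
have := sum_mul_le_sqrt (Cmat x k) r0 dist_q.
lra.
Qed.
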